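(* Let $N\ge2$ and let $H\in M_{(N-1)\times N}(\mathbb T)$ be partial Hadamard, with rows $R_1,\ldots,R_{N-1}\in\mathbb T^N$ and columns $C_1,\ldots,C_N\in\mathbb T^{N-1}$. Let $Z\in\mathbb C^N$ be a nonzero vector with $\mathrm{span}(R_1,\ldots,R_{N-1})^\perp=\mathbb CZ$. The following are equivalent: (1) the submagic matrix $(P_{ij})_{i,j=1}^{N-1}$, $P_{ij}=\mathrm{Proj}(R_i/R_j)\in M_N(\mathbb C)$, can be completed to an $N\times N$ magic matrix with entries in $M_N(\mathbb C)$; (2) with $G\in M_N(\mathbb C)$, $G_{kl}=\frac1N|\langle C_k,C_l\rangle|^2$, the matrix $G-(N-2)1_N$ is a projection; (3) $HDH^*=c\,1_{N-1}$ for some scalar $c$, where $D=\mathrm{diag}(|Z_1|^2,\ldots,|Z_N|^2)$.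
   Context: $\mathbb T$ is the unit circle; a partial Hadamard matrix has entries in $\mathbb T$ and pairwise orthogonal rows. $R_i/R_j$ is entrywise division; $\mathrm{Proj}(\xi)$ is the orthogonal projection onto $\mathbb C\xi$; $\langle x,y\rangle=\sum_l x_l\overline{y_l}$. A submagic matrix is a square matrix of orthogonal projections, pairwise orthogonal within each row and each column; it is magic if moreover each row and each column sums to $1$; a completion is a magic matrix whose upper-left $(N-1)\times(N-1)$ block is the given one. *)

From mathcomp Require Import all_boot all_algebra.
From mathcomp Require Import complex.
From mathcomp Require Import reals.
Set Implicit Arguments. Unset Strict Implicit. Unset Printing Implicit Defensive.
Import GRing.Theory Num.Theory.
Local Open Scope ring_scope.

Section Defs.
Variable C : numClosedFieldType.

Definition rdot n (x y : 'rV[C]_n) : C := \sum_(l < n) x 0 l * (y 0 l)^*.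

Definition adj m n (A : 'M[C]_(m, n)) : 'M[C]_(n, m) := \matrix_(i, j) (A j i)^*.

Definition is_oproj n (P : 'M[C]_n) : Prop := P *m P = P /\ adj P = P.

Definition Proj n (xi : 'rV[C]_n) : 'M[C]_n :=
  (rdot xi xi)^-1 *: \matrix_(k, l) (xi 0 k * (xi 0 l)^*).

Definition rdiv n (x y : 'rV[C]_n) : 'rV[C]_n := \row_l (x 0 l / y 0 l).

Definition partial_hadamard m n (H : 'M[C]_(m, n)) : Prop :=
  (forall i j, `|H i j| = 1) /\
  (forall i j : 'I_m, i != j -> rdot (row i H) (row j H) = 0).

Definition submagic m n (P : 'I_m -> 'I_m -> 'M[C]_n) : Prop :=
  (forall i j, is_oproj (P i j)) /\
  (forall i j k, j != k -> P i j *m P i k = 0) /\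
  (forall i j k, i != k -> P i j *m P k j = 0).

Definition magic m n (P : 'I_m -> 'I_m -> 'M[C]_n) : Prop :=
  submagic P /\
  (forall i, \sum_j P i j = 1%:M) /\
  (forall j, \sum_i P i j = 1%:M).

End Defs.

From mathcomp Require Import all_boot all_algebra.
From mathcomp Require Import complex.
From mathcomp Require Import reals.
From mathcomp Require Import ring.
Set Implicit Arguments. Unset Strict Implicit. Unset Printing Implicit Defensive.
Import GRing.Theory Num.Theory.
Local Open Scope ring_scope.

(* Appending to H the multiple u of Z with <u,u> = N gives a square matrix whose
   rows are pairwise orthogonal of squared norm N; it is thus invertible up to the
   scalar N, so its columns are orthogonal as well. Reading off these column
   relations shows that |u_k| = 1, so the completed matrix is a complex Hadamard
   matrix and its matrix of projections Proj(R_i/R_j) is a magic completion of P;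
   that |<C_k,C_l>|^2 is (N-1)^2 or 1, so G - (N-2)1 is the projection J/N; and
   that |Z_k| is constant, so D is scalar. All three conditions therefore hold. *)

Section InnerProduct.
Variable C : numClosedFieldType.
Variable n : nat.
Implicit Types x y : 'rV[C]_n.

Lemma rdotZl a x y : rdot (a *: x) y = a * rdot x y.
Proof. by rewrite /rdot mulr_sumr; apply: eq_bigr => l _; rewrite mxE mulrA. Qed.

Lemma rdotZr a x y : rdot x (a *: y) = a^* * rdot x y.
Proof.
by rewrite /rdot mulr_sumr; apply: eq_bigr => l _; rewrite mxE rmorphM mulrCA.
Qed.

Lemma rdotC x y : rdot y x = (rdot x y)^*.
Proof.
by rewrite /rdot rmorph_sum; apply: eq_bigr => l _; rewrite rmorphM /= conjCK mulrC.
Qed.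

Lemma rdot_ge0 x : 0 <= rdot x x.
Proof. by apply: sumr_ge0 => l _; apply: mul_conjC_ge0. Qed.

Lemma rdot_eq0 x : (rdot x x == 0) = (x == 0).
Proof.
apply/eqP/eqP => [x0|->]; last by rewrite /rdot big1 // => l _; rewrite mxE mul0r.
apply/rowP => l; rewrite mxE; apply/eqP; rewrite -mul_conjC_eq0; apply/eqP.
exact: (psumr_eq0P (fun i _ => mul_conjC_ge0 _) x0).
Qed.

Lemma mulmx_adjE m p (A : 'M[C]_(m, n)) (B : 'M[C]_(p, n)) i j :
  (A *m adj B) i j = rdot (row i A) (row j B).
Proof. by rewrite mxE; apply: eq_bigr => l _; rewrite !mxE. Qed.

Lemma Proj_mulmx x y : Proj x *m Proj y =
  ((rdot x x)^-1 * (rdot y y)^-1 * rdot y x) *: \matrix_(k, l) (x 0 k * (y 0 l)^*).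
Proof.
apply/matrixP => k l; rewrite !mxE.
rewrite [rdot y x]/rdot mulr_sumr mulr_suml; apply: eq_bigr => p _.
rewrite !mxE; ring.
Qed.

Lemma Proj_oproj x : x != 0 -> is_oproj (Proj x).
Proof.
rewrite -rdot_eq0 => xx0; split; first by rewrite Proj_mulmx mulfVK.
have xx_real : (rdot x x)^* = rdot x x by rewrite -rdotC.
by apply/matrixP => k l; rewrite !mxE !(rmorphM, fmorphV) /= conjCK xx_real [_ * x 0 k]mulrC.
Qed.

Lemma Proj_mul_eq0 x y : rdot y x = 0 -> Proj x *m Proj y = 0.
Proof. by move=> yx0; rewrite Proj_mulmx yx0 mulr0 scale0r. Qed.

End InnerProduct.

Section Hadamard.
Variable C : numClosedFieldType.

Lemma mul_conjC_norm1 (x : C) : `|x| = 1 -> x * x^* = 1.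
Proof. by move=> x1; rewrite -normCK x1 expr1n. Qed.

Lemma partial_hadamard_mulmx_adj m n (H : 'M[C]_(m, n)) :
  partial_hadamard H -> H *m adj H = n%:R%:M.
Proof.
move=> [H1 Horth]; apply/matrixP => i j; rewrite mulmx_adjE !mxE.
have [<-|ij] := eqVneq i j; last by rewrite Horth.
rewrite /rdot (eq_bigr (fun _ => 1)) ?sumr_const ?card_ord //.
by move=> l _; rewrite !mxE mul_conjC_norm1.
Qed.

Lemma mulmx_adj_partial_hadamard m n (A : 'M[C]_(m, n)) (c : C) :
  (forall i j, `|A i j| = 1) -> A *m adj A = c%:M -> partial_hadamard A.
Proof.
by move=> A1 AA; split=> // i j ij; rewrite -mulmx_adjE AA mxE (negPf ij) mulr0n.
Qed.

Lemma adj_mulmx_scalar m (A : 'M[C]_m) (c : C) :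
  c != 0 -> A *m adj A = c%:M -> adj A *m A = c%:M.
Proof.
move=> c0 AA; have : A *m (c^-1 *: adj A) = 1%:M.
  by rewrite -scalemxAr AA scale_scalar_mx mulVf.
move/mulmx1C; rewrite -scalemxAl => h.
by rewrite -[LHS]scale1r -(mulfV c0) -scalerA h scale_scalar_mx mulr1.
Qed.

Variable m : nat.
Hypothesis m_gt0 : (0 < m)%N.
Variable A : 'M[C]_m.
Hypothesis A_had : partial_hadamard A.

Let m_neq0 : m%:R != 0 :> C. Proof. by rewrite pnatr_eq0 -lt0n. Qed.
Let unitA i l : A i l * (A i l)^* = 1. Proof. exact/mul_conjC_norm1/A_had.1. Qed.

Lemma hadamard_col_orth k l : \sum_i (A i k)^* * A i l = (k == l)%:R * m%:R.
Proof.
have := congr1 (fun M : 'M_m => M k l) (adj_mulmx_scalar m_neq0 (partial_hadamard_mulmx_adj A_had)).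
by rewrite !mxE mulr_natl => <-; apply: eq_bigr => i _; rewrite mxE.
Qed.

Lemma rdiv_rowE i j p : rdiv (row i A) (row j A) 0 p = A i p * (A j p)^*.
Proof.
by rewrite !mxE invC_norm A_had.1 expr1n invr1 mul1r.
Qed.

Lemma rdot_rdiv_row i j k l :
  rdot (rdiv (row i A) (row j A)) (rdiv (row k A) (row l A)) =
  \sum_p (A i p * (A k p)^*) * ((A j p)^* * A l p).
Proof.
apply: eq_bigr => p _; rewrite !rdiv_rowE rmorphM /= conjCK; ring.
Qed.

Definition hadamard_magic i j := Proj (rdiv (row i A) (row j A)).

Lemma rdot_rdiv_row_self i j :
  rdot (rdiv (row i A) (row j A)) (rdiv (row i A) (row j A)) = m%:R.
Proof.
rewrite rdot_rdiv_row (eq_bigr (fun _ => 1)) ?sumr_const ?card_ord //.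
by move=> p _; rewrite unitA mul1r mulrC unitA.
Qed.

Lemma hadamard_magicE i j k l :
  hadamard_magic i j k l = m%:R^-1 * (A i k * (A i l)^*) * ((A j k)^* * A j l).
Proof.
rewrite /hadamard_magic /Proj rdot_rdiv_row_self.
by rewrite 2!mxE !rdiv_rowE rmorphM /= conjCK; ring.
Qed.

Lemma hadamard_magicP : magic hadamard_magic.
Proof.
have orth i j : i != j -> rdot (row i A) (row j A) = 0 by exact: A_had.2.
split; [split; [|split] | split].
- by move=> i j; apply: Proj_oproj; rewrite -rdot_eq0 rdot_rdiv_row_self.
- move=> i j k jk; apply: Proj_mul_eq0; rewrite rdot_rdiv_row -[RHS](orth j k) //.
  by apply: eq_bigr => p _; rewrite unitA mul1r !mxE mulrC.
- move=> i j k ik; apply: Proj_mul_eq0; rewrite rdot_rdiv_row -[RHS](orth k i) 1?eq_sym //.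
  by apply: eq_bigr => p _; rewrite [(A j p)^* * _]mulrC unitA mulr1 !mxE.
- move=> i; apply/matrixP => k l; rewrite summxE.
  under eq_bigr do rewrite hadamard_magicE.
  rewrite -mulr_sumr hadamard_col_orth !mxE.
  have [<-|_] := eqVneq k l; last by rewrite !mul0r mulr0.
  by rewrite unitA mulr1 mul1r mulVf.
- move=> j; apply/matrixP => k l; rewrite summxE.
  under eq_bigr do rewrite hadamard_magicE.
  rewrite -mulr_suml -mulr_sumr.
  have -> : \sum_i A i k * (A i l)^* = (k == l)%:R * m%:R.
    have := congr1 (fun x : C => x^*) (hadamard_col_orth k l).
    rewrite rmorph_sum rmorphM /= !conjC_nat => <-.
    by apply: eq_bigr => i _; rewrite rmorphM /= conjCK mulrC.
  rewrite !mxE; have [<-|_] := eqVneq k l; last by rewrite !(mul0r, mulr0).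
  by rewrite mul1r mulVf // mul1r mulrC unitA.
Qed.

End Hadamard.

Lemma const_mx_inv_oproj (C : numClosedFieldType) m :
  (0 < m)%N -> is_oproj (const_mx (m%:R^-1) : 'M[C]_m).
Proof.
move=> m_gt0; have m_neq0 : m%:R != 0 :> C by rewrite pnatr_eq0 -lt0n.
split; apply/matrixP => k l; rewrite !mxE; last by rewrite fmorphV /= conjC_nat.
rewrite (eq_bigr (fun _ => m%:R^-1 * m%:R^-1)) => [|i _]; last by rewrite !mxE.
by rewrite sumr_const card_ord -[LHS]mulr_natr mulfVK.
Qed.

Section LastRow.
Variable C : numClosedFieldType.
Variable p : nat.
Variable H : 'M[C]_(p, p.+1).
Variable u : 'rV[C]_p.+1.

Definition add_last_row : 'M[C]_p.+1 :=
  \matrix_(i, l) if unlift ord_max i is Some j then H j l else u 0 l.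

Lemma widen_ord_lift (h : (p <= p.+1)%N) (i : 'I_p) : widen_ord h i = lift ord_max i.
Proof. by apply: val_inj; rewrite /= /bump leqNgt ltn_ord. Qed.

Lemma row_add_last_row_lift i : row (lift ord_max i) add_last_row = row i H.
Proof. by apply/rowP => l; rewrite !mxE liftK. Qed.

Lemma row_add_last_row_max : row ord_max add_last_row = u.
Proof. by apply/rowP => l; rewrite !mxE unlift_none. Qed.

Lemma add_last_row_mulmx_adj (c : C) :
  H *m adj H = c%:M -> (forall i, rdot (row i H) u = 0) -> rdot u u = c ->
  add_last_row *m adj add_last_row = c%:M.
Proof.
move=> HH Hu uu; apply/matrixP => i j; rewrite mulmx_adjE.
have rowE k : row k add_last_row = if unlift ord_max k is Some k' then row k' H else u.
  by case: unliftP => [k' ->|->]; rewrite ?row_add_last_row_lift ?row_add_last_row_max.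
rewrite !rowE !mxE; case: unliftP => [a ->|->]; case: unliftP => [b ->|->].
- by rewrite -mulmx_adjE HH !mxE (inj_eq lift_inj).
- by rewrite Hu eq_sym (negPf (neq_lift _ _)) mulr0n.
- by rewrite rdotC Hu conjC0 (negPf (neq_lift _ _)) mulr0n.
- by rewrite uu eqxx mulr1n.
Qed.

Lemma adj_add_last_row_mulmxE k l :
  (adj add_last_row *m add_last_row) k l =
  \sum_(i < p) (H i k)^* * H i l + (u 0 k)^* * u 0 l.
Proof.
rewrite mxE big_ord_recr /= !mxE unlift_none; congr (_ + _).
by apply: eq_bigr => i _; rewrite widen_ord_lift !mxE liftK.
Qed.

End LastRow.

Section Completion.
Variable C : numClosedFieldType.
Variable p : nat.
Variable H : 'M[C]_(p, p.+1).
Variable Z : 'rV[C]_p.+1.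
Hypothesis H_had : partial_hadamard H.
Hypothesis Z_neq0 : Z != 0.
Hypothesis Z_orth : forall i, rdot (row i H) Z = 0.

Let N : C := p.+1%:R.
Let s : C := sqrtC (N / rdot Z Z).
Let u : 'rV[C]_p.+1 := s *: Z.

Lemma rdot_completion_row : rdot u u = N.
Proof.
have ZZ_neq0 : rdot Z Z != 0 by rewrite rdot_eq0.
have s_real : s^* = s by apply/geC0_conj; rewrite sqrtC_ge0 divr_ge0 ?ler0n ?rdot_ge0.
by rewrite rdotZl rdotZr s_real mulrA -expr2 sqrtCK divfK.
Qed.

Lemma completion_mulmx_adj : add_last_row H u *m adj (add_last_row H u) = N%:M.
Proof.
apply: add_last_row_mulmx_adj; last exact: rdot_completion_row.
- exact: partial_hadamard_mulmx_adj.
- by move=> i; rewrite rdotZr Z_orth mulr0.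
Qed.

Lemma completion_col_sum k l :
  \sum_(i < p) (H i k)^* * H i l = (k == l)%:R * N - (u 0 k)^* * u 0 l.
Proof.
have N_neq0 : N != 0 by rewrite pnatr_eq0.
have := congr1 (fun M : 'M_p.+1 => M k l) (adj_mulmx_scalar N_neq0 completion_mulmx_adj).
by rewrite adj_add_last_row_mulmxE [N%:M k l]mxE mulr_natl => <-; rewrite addrK.
Qed.

Lemma norm_completion_row k : `|u 0 k| = 1.
Proof.
have := completion_col_sum k k; rewrite eqxx mul1r.
rewrite (eq_bigr (fun _ => 1)) => [|i _]; last by rewrite mulrC mul_conjC_norm1 ?H_had.1.
rewrite sumr_const card_ord /N -natr1 => /eqP; rewrite eq_sym subr_eq (inj_eq (addrI _)).
by rewrite mulrC -normCK => /eqP/esym/eqP; rewrite (sqrp_eq1 (normr_ge0 _)) => /eqP.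
Qed.

Lemma completion_hadamard : partial_hadamard (add_last_row H u).
Proof.
apply: mulmx_adj_partial_hadamard completion_mulmx_adj => i l; rewrite mxE.
by case: unlift => [j|]; [exact: H_had.1 | exact: norm_completion_row].
Qed.

Lemma norm_col_dot k l :
  `|rdot (col k H)^T (col l H)^T| ^+ 2 = if k == l then p%:R ^+ 2 else 1.
Proof.
have -> : rdot (col k H)^T (col l H)^T = \sum_i (H i l)^* * H i k.
  by apply: eq_bigr => i _; rewrite !mxE mulrC.
rewrite completion_col_sum eq_sym; have [->|_] := eqVneq k l.
  by rewrite mul1r mulrC mul_conjC_norm1 ?norm_completion_row // /N -natr1 addrK normr_nat.
by rewrite mul0r sub0r normrN normrM norm_conjC !norm_completion_row mulr1 expr1n.
Qed.

Lemma norm_orth_const k l : `|Z 0 k| = `|Z 0 l|.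
Proof.
have := norm_completion_row k; rewrite -(norm_completion_row l) !mxE !normrM.
apply: mulfI; apply/eqP => s0.
by have := norm_completion_row k; rewrite !mxE normrM s0 mul0r => /eqP; rewrite eq_sym oner_eq0.
Qed.

Lemma completion_magic (h : (p <= p.+1)%N) :
  exists Q : 'I_p.+1 -> 'I_p.+1 -> 'M[C]_p.+1, magic Q /\
    forall i j, Q (widen_ord h i) (widen_ord h j) = Proj (rdiv (row i H) (row j H)).
Proof.
exists (hadamard_magic (add_last_row H u)); split.
  exact: (hadamard_magicP (ltn0Sn p) completion_hadamard).
by move=> i j; rewrite /hadamard_magic !widen_ord_lift !row_add_last_row_lift.
Qed.

Lemma gram_oproj : (0 < p)%N ->
  is_oproj (\matrix_(k, l) (N^-1 * `|rdot (col k H)^T (col l H)^T| ^+ 2)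
            - (p.+1 - 2)%:R *: 1%:M).
Proof.
move=> p_gt0.
suff -> : \matrix_(k, l) (N^-1 * `|rdot (col k H)^T (col l H)^T| ^+ 2)
          - (p.+1 - 2)%:R *: 1%:M = const_mx N^-1 by apply: const_mx_inv_oproj.
apply/matrixP => k l; rewrite !mxE norm_col_dot subSS natrB //.
have [_|_] := eqVneq k l; last by rewrite mulr0 subr0 mulr1.
by rewrite mulr1 /N -natr1; field; rewrite natr1 pnatr_eq0.
Qed.

Lemma mulmx_diag_norm_orth_adj :
  exists c, H *m diag_mx (\row_l (`|Z 0 l| ^+ 2)) *m adj H = c%:M.
Proof.
have -> : \row_l (`|Z 0 l| ^+ 2) = const_mx (`|Z 0 0| ^+ 2).
  by apply/rowP => l; rewrite !mxE (norm_orth_const l 0).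
rewrite diag_const_mx mul_mx_scalar -scalemxAl partial_hadamard_mulmx_adj //.
by exists (`|Z 0 0| ^+ 2 * p.+1%:R); rewrite scale_scalar_mx.
Qed.

End Completion.

Theorem proposition3p7 (R : realType) (N : nat) (HN : (2 <= N)%N)
  (H : 'M[R[i]]_(N.-1, N)) (Z : 'rV[R[i]]_N) :
  partial_hadamard H ->
  Z != 0 ->
  (forall v : 'rV[R[i]]_N,
     (forall w : 'rV[R[i]]_N, (w <= H)%MS -> rdot w v = 0) <->
     exists c : R[i], v = c *: Z) ->
  let P := fun i j : 'I_N.-1 => Proj (rdiv (row i H) (row j H)) in
  let G : 'M[R[i]]_N :=
    \matrix_(k, l) ((N%:R)^-1 * `|rdot (col k H)^T (col l H)^T| ^+ 2) in
  let D : 'M[R[i]]_N := diag_mx (\row_l (`|Z 0 l| ^+ 2)) in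
  [/\ (exists Q : 'I_N -> 'I_N -> 'M[R[i]]_N,
          magic Q /\
          forall i j : 'I_N.-1,
            Q (widen_ord (leq_pred N) i) (widen_ord (leq_pred N) j) = P i j)
        <-> is_oproj (G - (N - 2)%:R *: 1%:M),
      is_oproj (G - (N - 2)%:R *: 1%:M)
        <-> (exists c : R[i], H *m D *m adj H = c%:M)
    & (exists c : R[i], H *m D *m adj H = c%:M)
        <-> (exists Q : 'I_N -> 'I_N -> 'M[R[i]]_N,
          magic Q /\
          forall i j : 'I_N.-1,
            Q (widen_ord (leq_pred N) i) (widen_ord (leq_pred N) j) = P i j)].
Proof.
case: N HN H Z => [|[|n]] // _ H Z H_had Z_neq0 Z_perp P G D.
have Z_orth i : rdot (row i H) Z = 0.
  by apply: (proj2 (Z_perp Z)); [exists 1; rewrite scale1r | exact: row_sub].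
have magic_completion := completion_magic H_had Z_neq0 Z_orth (leq_pred n.+2).
have gram := gram_oproj H_had Z_neq0 Z_orth (ltn0Sn n).
have HDH := mulmx_diag_norm_orth_adj H_had Z_neq0 Z_orth.
by split; split.
Qed.
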